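(* Let $\omega\in(0,1/2)$ and $1/\{2(1-\omega)\}<\gamma<1$. Then $$\sup_{\mathbf u\in[0,1]^d:\ g(\mathbf u)\ge n^{-\gamma}}\Big|\int_{[0,1]^d}\frac{g(\mathbf w)^\omega}{g(\mathbf u)^\omega}\,\mathrm d\mu_{n,\mathbf u}(\mathbf w)-1\Big|=\mathrm O\{n^{-(1-\gamma)/2}\log n\},\qquad n\to\infty.$$
   Context: $d\ge2$; $g(\mathbf u)=\bigwedge_{j=1}^d\{u_j\wedge\bigvee_{k\ne j}(1-u_k)\}$ for $\mathbf u\in[0,1]^d$ ($\wedge$ = min, $\vee$ = max). For $\mathbf u\in[0,1]^d$, $\mu_{n,\mathbf u}$ is the law of $(S_1/n,\dots,S_d/n)$ with $S_1,\dots,S_d$ independent, $S_j\sim\mathrm{Bin}(n,u_j)$. *)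

From HB Require Import structures.
From mathcomp Require Import all_boot all_order all_algebra.
From mathcomp Require Import reals exp.
Set Implicit Arguments. Unset Strict Implicit. Unset Printing Implicit Defensive.
Import Order.TTheory GRing.Theory Num.Theory.
Local Open Scope ring_scope.

(* g(u) = min_j { u_j /\ max_{k <> j} (1 - u_k) }.
   The identity elements (1 for min, 0 for max) are harmless on [0,1]^d with d >= 2. *)
Definition gfun (R : realType) (d : nat) (u : 'I_d -> R) : R :=
  \big[Num.min/1]_(j < d) Num.min (u j) (\big[Num.max/0]_(k < d | k != j) (1 - u k)).

(* probability mass of mu_{n,u} at the point (k_1/n, ..., k_d/n):
   product of independent Bin(n, u_j) masses. *)
Definition binom_mass (R : realType) (d n : nat) (u : 'I_d -> R)
    (k : {ffun 'I_d -> 'I_n.+1}) : R :=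
  \prod_(j < d) ('C(n, k j)%:R * u j ^+ k j * (1 - u j) ^+ (n - k j)).

(* integral of f against mu_{n,u}, the law of (S_1/n, ..., S_d/n);
   mu_{n,u} is supported on the finite grid {0,1/n,...,1}^d. *)
Definition binom_integral (R : realType) (d n : nat) (u : 'I_d -> R)
    (f : ('I_d -> R) -> R) : R :=
  \sum_(k : {ffun 'I_d -> 'I_n.+1})
     binom_mass u k * f (fun j => (k j)%:R / n%:R).

From HB Require Import structures.
From mathcomp Require Import all_boot all_order all_algebra.
From mathcomp Require Import reals exp.
From mathcomp Require Import ring lra.
Set Implicit Arguments. Unset Strict Implicit. Unset Printing Implicit Defensive.
Import Order.TTheory GRing.Theory Num.Theory.
Local Open Scope ring_scope.

(* Write G = g(u).  For 0 < omega <= 1 and t >= 0 we have |t^omega - 1| <= |t - 1|,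
   so the integrand differs from 1 by at most |g(w) - G| / G.  With c = sqrt(G/n),
   |g(w) - G| is dominated by a sum over the coordinates j of terms that are affine
   in y^2, where y = w_j - u_j, one for each v in {u_j, 1 - u_j}: if
   v <= 2G the coordinate is charged |y| <= y^2/(2c) + c/2, and if v > 2G it can only
   affect g after moving by at least v/2, which costs G <= 4 G y^2 / v^2.  Integrating
   against the binomial law replaces y^2 by the variance u_j(1 - u_j)/n, after which
   each term is at most 2c as soon as G >= 1/n.  The error is therefore at most
   4 d c / G = 4 d / sqrt(n G) <= 4 d n^(-(1-gamma)/2). *)

Section Bernstein.
Variable R : realType.
Implicit Types x : R.

Definition bernstein x (n a : nat) : R :=
  'C(n, a)%:R * x ^+ a * (1 - x) ^+ (n - a).

Lemma bernstein_ge0 x n a : 0 <= x <= 1 -> 0 <= bernstein x n a.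
Proof.
by case/andP=> x0 x1; rewrite !mulr_ge0 ?exprn_ge0 ?subr_ge0.
Qed.

Lemma sum_bernstein x n : \sum_(a < n.+1) bernstein x n a = 1.
Proof.
have := exprDn (1 - x) x n; rewrite subrK expr1n => ->.
by apply: eq_bigr => a _; rewrite /bernstein -mulr_natl; ring.
Qed.

Lemma sum_natr_bernsteinS x m (F : nat -> R) :
  \sum_(a < m.+2) a%:R * bernstein x m.+1 a * F a =
  m.+1%:R * x * \sum_(a < m.+1) bernstein x m a * F a.+1.
Proof.
rewrite big_ord_recl /= !mul0r add0r mulr_sumr.
apply: eq_bigr => a _; rewrite /bernstein /bump /= add1n subSS exprS.
have /(congr1 (fun k => k%:R : R)) := mul_bin_diag m.+1 a.
rewrite !natrM => binE.
transitivity (a.+1%:R * 'C(m.+1, a.+1)%:R * x * x ^+ a * (1 - x) ^+ (m - a)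
              * F a.+1); first by ring.
by rewrite -binE; ring.
Qed.

Lemma bernstein_mean x n : \sum_(a < n.+1) a%:R * bernstein x n a = n%:R * x.
Proof.
case: n => [|m]; first by rewrite big_ord1 !mul0r.
have := sum_natr_bernsteinS x m (fun=> 1).
under eq_bigr do rewrite mulr1; move=> ->.
by under eq_bigr do rewrite mulr1; rewrite sum_bernstein mulr1.
Qed.

Lemma bernstein_moment2 x n :
  \sum_(a < n.+1) a%:R ^+ 2 * bernstein x n a = n%:R * x * ((n%:R - 1) * x + 1).
Proof.
case: n => [|m]; first by rewrite big_ord1 /=; ring.
transitivity (\sum_(a < m.+2) a%:R * bernstein x m.+1 a * a%:R).
  by apply: eq_bigr => a _; ring.
rewrite sum_natr_bernsteinS.
under eq_bigr do rewrite -natr1 mulrDr mulr1.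
rewrite big_split /= sum_bernstein.
under eq_bigr do rewrite mulrC.
by rewrite bernstein_mean -natr1; ring.
Qed.

Lemma bernstein_variance x n : (0 < n)%N ->
  \sum_(a < n.+1) bernstein x n a * (a%:R / n%:R - x) ^+ 2 = x * (1 - x) / n%:R.
Proof.
move=> n_gt0; have n_neq0 : n%:R != 0 :> R by rewrite pnatr_eq0 -lt0n.
transitivity (\sum_(a < n.+1) (a%:R ^+ 2 * bernstein x n a * n%:R^-1 ^+ 2
   + (a%:R * bernstein x n a * (-2 * x / n%:R) + bernstein x n a * x ^+ 2))).
  by apply: eq_bigr => a _; ring.
rewrite !big_split /= -!mulr_suml sum_bernstein bernstein_mean bernstein_moment2.
by field.
Qed.

End Bernstein.

Section BinomIntegral.
Variables (R : realType) (d n : nat) (u : 'I_d -> R).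
Hypothesis u01 : forall j, 0 <= u j <= 1.

Lemma binom_mass_ge0 (k : {ffun 'I_d -> 'I_n.+1}) : 0 <= binom_mass u k.
Proof. by apply: prodr_ge0 => j _; exact: bernstein_ge0. Qed.

Lemma sum_binom_mass : \sum_(k : {ffun 'I_d -> 'I_n.+1}) binom_mass u k = 1.
Proof.
rewrite -(bigA_distr_bigA (fun j (a : 'I_n.+1) => bernstein (u j) n a)).
by apply: big1 => j _; exact: sum_bernstein.
Qed.

Lemma grid_in_unit_cube (k : {ffun 'I_d -> 'I_n.+1}) j :
  0 <= ((k j)%:R / n%:R : R) <= 1.
Proof.
rewrite divr_ge0 //=; case: n k => [|m] k; first by rewrite invr0 mulr0.
by rewrite ler_pdivrMr ?ltr0n // mul1r ler_nat -ltnS.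
Qed.

Lemma binom_integral_coord (i : 'I_d) (F : R -> R) :
  binom_integral n u (fun w => F (w i)) =
  \sum_(a < n.+1) bernstein (u i) n a * F (a%:R / n%:R).
Proof.
pose G j (a : 'I_n.+1) := bernstein (u j) n a * (if j == i then F (a%:R / n%:R) else 1).
transitivity (\sum_(k : {ffun 'I_d -> 'I_n.+1}) \prod_(j < d) G j (k j)).
  apply: eq_bigr => k _; rewrite /G big_split /=; congr (_ * _).
  by rewrite (bigD1 i) //= eqxx big1 ?mulr1 // => j /negbTE ->.
rewrite -bigA_distr_bigA (bigD1 i) //= [X in _ * X]big1 ?mulr1.
  by apply: eq_bigr => a _; rewrite /G eqxx.
move=> j /negbTE ji; rewrite /G.
by under eq_bigr do rewrite ji mulr1; exact: sum_bernstein.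
Qed.

Lemma binom_integral_sum_coord (F : 'I_d -> R -> R) :
  binom_integral n u (fun w => \sum_(i < d) F i (w i)) =
  \sum_(i < d) \sum_(a < n.+1) bernstein (u i) n a * F i (a%:R / n%:R).
Proof.
rewrite /binom_integral; under eq_bigr do rewrite mulr_sumr.
rewrite exchange_big; apply: eq_bigr => i _; exact: binom_integral_coord.
Qed.

Lemma binom_integralZ (a : R) (f : ('I_d -> R) -> R) :
  binom_integral n u (fun w => a * f w) = a * binom_integral n u f.
Proof. by rewrite /binom_integral mulr_sumr; apply: eq_bigr => k _; rewrite mulrCA. Qed.

Lemma ler_binom_integral (f h : ('I_d -> R) -> R) :
  (forall w, (forall j, 0 <= w j <= 1) -> f w <= h w) ->
  binom_integral n u f <= binom_integral n u h.
Proof.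
move=> fh; apply: ler_sum => k _; apply: ler_wpM2l; first exact: binom_mass_ge0.
by apply: fh => j; exact: grid_in_unit_cube.
Qed.

Lemma norm_binom_integral_sub (f : ('I_d -> R) -> R) (c : R) :
  `|binom_integral n u f - c| <= binom_integral n u (fun w => `|f w - c|).
Proof.
rewrite -[X in _ - X]mul1r -sum_binom_mass mulr_suml -sumrB.
apply: le_trans (ler_norm_sum _ _ _) _; apply: ler_sum => k _.
by rewrite -mulrBr normrM ger0_norm // binom_mass_ge0.
Qed.

End BinomIntegral.

Section DeviationBound.
Variable R : realType.
Implicit Types G c v s x : R.

Definition dev_bound G c v s : R :=
  if v <= 2 * G then s / (2 * c) + c / 2 else 4 * G * s / v ^+ 2.

Lemma dev_bound_ge0 G c v s : 0 <= G -> 0 < c -> 0 <= s -> 0 <= dev_bound G c v s.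
Proof.
move=> G0 c0 s0; rewrite /dev_bound; case: ifP => _.
  by rewrite addr_ge0 ?divr_ge0 // ?mulr_ge0 // ltW.
by rewrite divr_ge0 ?sqr_ge0 // !mulr_ge0.
Qed.

Lemma le_add_dev_bound G c v x : 0 < c -> v <= 2 * G ->
  x <= v + dev_bound G c v ((x - v) ^+ 2).
Proof.
move=> c0 vG; rewrite /dev_bound vG.
have : 0 <= (x - v - c) ^+ 2 / (2 * c) by rewrite divr_ge0 ?sqr_ge0 // mulr_ge0 // ltW.
have -> : (x - v - c) ^+ 2 / (2 * c) = (x - v) ^+ 2 / (2 * c) + c / 2 - (x - v).
  by field; rewrite lt0r_neq0.
lra.
Qed.

Lemma sub_le_dev_bound G c v x : 0 < G -> 0 < c -> G <= v -> 0 <= x ->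
  G - x <= dev_bound G c v ((x - v) ^+ 2).
Proof.
move=> G0 c0 Gv x0; case: (leP v (2 * G)) => vG.
  have := le_add_dev_bound (2 * v - x) c0 vG.
  have -> : (2 * v - x - v) ^+ 2 = (x - v) ^+ 2 by ring.
  lra.
rewrite /dev_bound (lt_geF vG).
have [Gx|xG] := leP G x.
  apply: le_trans (_ : 0 <= _); first by rewrite subr_le0.
  by rewrite divr_ge0 ?sqr_ge0 // mulr_ge0 ?sqr_ge0 // mulr_ge0 // ltW.
apply: le_trans (_ : G <= _); first lra.
rewrite ler_pdivlMr; last by rewrite exprn_gt0 //; lra.
have : v ^+ 2 <= 4 * (x - v) ^+ 2 by nra.
nra.
Qed.

Lemma sum_bernstein_dev_bound G c v x n : (0 < n)%N ->
  \sum_(a < n.+1) bernstein x n a * dev_bound G c v ((a%:R / n%:R - x) ^+ 2) =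
  dev_bound G c v (x * (1 - x) / n%:R).
Proof.
move=> n_gt0; rewrite /dev_bound -bernstein_variance //; case: ifP => _.
  under eq_bigr do rewrite mulrDr mulrA.
  by rewrite big_split /= -!mulr_suml sum_bernstein mul1r.
by rewrite mulr_sumr mulr_suml; apply: eq_bigr => a _; ring.
Qed.

Lemma dev_bound_le G c v s n : (0 < n)%N -> 0 < G -> 0 < c ->
  c ^+ 2 = G / n%:R -> n%:R^-1 <= c -> 0 <= v -> 0 <= s <= v / n%:R ->
  dev_bound G c v s <= 2 * c.
Proof.
move=> n_gt0 G0 c0 cE nc v0 /andP[s0 sv].
set iN := n%:R^-1 in cE nc sv.
have iN0 : 0 < iN by rewrite invr_gt0 ltr0n.
rewrite /dev_bound; case: ifP => vG.
  have : s / (2 * c) <= c by rewrite ler_pdivrMr; nra.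
  lra.
rewrite ler_pdivrMr; last by rewrite exprn_gt0 //; lra.
nra.
Qed.

End DeviationBound.

Section GfunDeviation.
Variables (R : realType) (d : nat).
Hypothesis d_ge2 : (2 <= d)%N.
Implicit Types u w : 'I_d -> R.

Definition max_compl w (j : 'I_d) : R :=
  \big[Num.max/0]_(k < d | k != j) (1 - w k).

Lemma gfun_le w j : gfun w <= Num.min (w j) (max_compl w j).
Proof. exact: bigmin_le. Qed.

Lemma le_max_compl w j k : k != j -> 1 - w k <= max_compl w j.
Proof. exact: (le_bigmax_cond 0 (fun k => 1 - w k)). Qed.

Lemma gfun_ge0 w : (forall j, 0 <= w j <= 1) -> 0 <= gfun w.
Proof.
move=> w01; apply: le_bigmin => // j _.
by rewrite le_min (andP (w01 j)).1 bigmax_ge_id.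
Qed.

Lemma exists_ord_neq (j : 'I_d) : exists k : 'I_d, k != j.
Proof.
have d_gt0 : (0 < d)%N by apply: ltnW.
case: (eqVneq j (Ordinal d_gt0)) => [->|j_neq].
  by exists (Ordinal d_ge2); rewrite -val_eqE.
by exists (Ordinal d_gt0); rewrite eq_sym.
Qed.

Lemma exists_gfun_eq w : (forall j, 0 <= w j <= 1) ->
  exists j, gfun w = Num.min (w j) (max_compl w j).
Proof.
move=> w01; have [j0 _] := exists_ord_neq (Ordinal d_ge2).
have le1 i : xpredT i -> Num.min (w i) (max_compl w i) <= 1.
  by rewrite ge_min (andP (w01 i)).2.
by have [j _ gwE] := eq_bigmin j0 xpredT _ isT le1; exists j.
Qed.

Lemma exists_max_compl_eq w j : (forall j, 0 <= w j <= 1) ->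
  exists2 k, k != j & max_compl w j = 1 - w k.
Proof.
move=> w01; have [k0 k0j] := exists_ord_neq j.
have ge0 k : k != j -> 0 <= 1 - w k by rewrite subr_ge0 (andP (w01 k)).2.
by have [k kj mE] := eq_bigmax k0 (fun k => k != j) _ k0j ge0; exists k.
Qed.

Definition coord_dev_bound G c u w : R :=
  \sum_(i < d) (dev_bound G c (u i) ((w i - u i) ^+ 2)
              + dev_bound G c (1 - u i) ((w i - u i) ^+ 2)).

Lemma dev_bound_le_coord G c u w i : 0 <= G -> 0 < c ->
  dev_bound G c (u i) ((w i - u i) ^+ 2) <= coord_dev_bound G c u w /\
  dev_bound G c (1 - u i) ((w i - u i) ^+ 2) <= coord_dev_bound G c u w.
Proof.
move=> G0 c0; rewrite /coord_dev_bound (bigD1 i) //=.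
have := dev_bound_ge0 (u i) G0 c0 (sqr_ge0 (w i - u i)).
have := dev_bound_ge0 (1 - u i) G0 c0 (sqr_ge0 (w i - u i)).
have : 0 <= \sum_(k < d | k != i) (dev_bound G c (u k) ((w k - u k) ^+ 2)
              + dev_bound G c (1 - u k) ((w k - u k) ^+ 2)).
  by apply: sumr_ge0 => k _; rewrite addr_ge0 ?dev_bound_ge0 ?sqr_ge0.
lra.
Qed.

Section FixedCentre.
Variables (u w : 'I_d -> R) (c : R).
Hypotheses (u01 : forall j, 0 <= u j <= 1) (w01 : forall j, 0 <= w j <= 1).
Hypotheses (gu_gt0 : 0 < gfun u) (c_gt0 : 0 < c).
Let S := coord_dev_bound (gfun u) c u w.

Lemma gfun_sub_le : gfun u - gfun w <= S.
Proof.
have [j gwE] := exists_gfun_eq w01; have [k kj ukE] := exists_max_compl_eq j u01.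
have := gfun_le u j; rewrite ukE !le_min => /andP[Guj Guk].
have wk_le1 : 0 <= 1 - w k by rewrite subr_ge0 (andP (w01 k)).2.
have devj := sub_le_dev_bound gu_gt0 c_gt0 Guj (andP (w01 j)).1.
have := sub_le_dev_bound gu_gt0 c_gt0 Guk wk_le1.
have -> : (1 - w k - (1 - u k)) ^+ 2 = (w k - u k) ^+ 2 by ring.
move=> devk; have wkM := le_max_compl w kj.
have [Sj _] := dev_bound_le_coord u w j (ltW gu_gt0) c_gt0.
have [_ Sk] := dev_bound_le_coord u w k (ltW gu_gt0) c_gt0.
by rewrite /S gwE; case: (leP (w j) (max_compl w j)) => _; lra.
Qed.

Lemma gfun_le_add : gfun w - gfun u <= S.
Proof.
have [j guE] := exists_gfun_eq u01; have [k kj wkE] := exists_max_compl_eq j w01.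
have := gfun_le w j; rewrite wkE !le_min => /andP[gwj gwk].
have ukM := le_max_compl u kj.
have [Sj _] := dev_bound_le_coord u w j (ltW gu_gt0) c_gt0.
have [_ Sk] := dev_bound_le_coord u w k (ltW gu_gt0) c_gt0.
rewrite /S; move: guE; case: (leP (u j) (max_compl u j)) => _ guE.
  have uj_le : u j <= 2 * gfun u by have := gu_gt0; lra.
  have := le_add_dev_bound (w j) c_gt0 uj_le; lra.
have uk_le : 1 - u k <= 2 * gfun u by have := gu_gt0; lra.
have := le_add_dev_bound (1 - w k) c_gt0 uk_le.
have -> : (1 - w k - (1 - u k)) ^+ 2 = (w k - u k) ^+ 2 by ring.
lra.
Qed.

Lemma dist_gfun_le : `|gfun w - gfun u| <= S.
Proof.
rewrite ler_norml; have := gfun_sub_le; have := gfun_le_add.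
by move=> ? ?; apply/andP; split; lra.
Qed.

End FixedCentre.

End GfunDeviation.

Section PowerRatio.
Variable R : realType.

Lemma dist_powR1_le (t om : R) : 0 <= t -> 0 < om <= 1 -> `|t `^ om - 1| <= `|t - 1|.
Proof.
move=> t0 /andP[om0 om1]; have powR_mono := ge0_ler_powR (ltW om0).
have one_nneg : 1 \in @Num.nneg R by rewrite nnegrE.
have one_om : 1 `^ om = 1 :> R by rewrite powR1.
move: t0; rewrite le_eqVlt => /predU1P[<-|t_gt0].
  by rewrite powR0 ?lt0r_neq0.
have t_nneg : t \in Num.nneg by rewrite nnegrE ltW.
have [t1|t1] := leP t 1.
  have : t <= t `^ om by rewrite ger1_powR ?t_gt0.
  have : t `^ om <= 1 by rewrite -one_om powR_mono.
  by move=> ? ?; rewrite !ler0_norm ?subr_le0 //; lra.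
have : t `^ om <= t by rewrite ler1_powR // ltW.
have : 1 <= t `^ om by rewrite -one_om powR_mono // ltW.
by move=> ? ?; rewrite !ger0_norm ?subr_ge0 //; lra.
Qed.

Lemma dist_powR_ratio_le (a b om : R) : 0 <= a -> 0 < b -> 0 < om <= 1 ->
  `|a `^ om / b `^ om - 1| <= `|a - b| / b.
Proof.
move=> a0 b0 om01; have b_neq0 := lt0r_neq0 b0.
have bom_neq0 : b `^ om != 0 by rewrite lt0r_neq0 // powR_gt0.
have t0 : 0 <= a / b by rewrite divr_ge0 // ltW.
have -> : a = a / b * b by rewrite divfK.
rewrite (powRM _ t0 (ltW b0)) mulfK //.
have -> : a / b * b - b = (a / b - 1) * b by ring.
rewrite normrM (gtr0_norm b0) mulfK //.
exact: dist_powR1_le.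
Qed.

End PowerRatio.

Lemma sum_bernstein_dev_bound_pair_le (R : realType) (G c x : R) n :
  (0 < n)%N -> 0 < G -> 0 < c -> c ^+ 2 = G / n%:R -> n%:R^-1 <= c -> 0 <= x <= 1 ->
  \sum_(a < n.+1) bernstein x n a *
    (dev_bound G c x ((a%:R / n%:R - x) ^+ 2)
     + dev_bound G c (1 - x) ((a%:R / n%:R - x) ^+ 2)) <= 4 * c.
Proof.
move=> n_gt0 G0 c0 cE nc /andP[x0 x1].
under eq_bigr do rewrite mulrDr.
rewrite big_split /= !sum_bernstein_dev_bound //.
have var_ge0 : 0 <= x * (1 - x) / n%:R by rewrite !mulr_ge0 ?invr_ge0 ?subr_ge0.
have var_le v : x * (1 - x) <= v -> x * (1 - x) / n%:R <= v / n%:R.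
  by move=> ?; rewrite ler_wpM2r ?invr_ge0.
have x1' : 0 <= 1 - x by rewrite subr_ge0.
have var_x : 0 <= x * (1 - x) / n%:R <= x / n%:R by rewrite var_ge0 var_le //; nra.
have var_1x : 0 <= x * (1 - x) / n%:R <= (1 - x) / n%:R by rewrite var_ge0 var_le //; nra.
have := dev_bound_le n_gt0 G0 c0 cE nc x0 var_x.
have := dev_bound_le n_gt0 G0 c0 cE nc x1' var_1x.
lra.
Qed.

Theorem binom_integral_gfun_ratio_le (R : realType) (d n : nat) (u : 'I_d -> R)
    (omega : R) :
  (2 <= d)%N -> (0 < n)%N -> (forall j, 0 <= u j <= 1) -> 0 < omega <= 1 ->
  n%:R^-1 <= gfun u ->
  `|binom_integral n u (fun w => gfun w `^ omega / gfun u `^ omega) - 1|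
    <= 4 * d%:R / Num.sqrt (gfun u * n%:R).
Proof.
move=> d_ge2 n_gt0 u01 om01 Gn; set G := gfun u in Gn *.
have n_pos : 0 < n%:R :> R by rewrite ltr0n.
have G_gt0 : 0 < G by apply: lt_le_trans Gn; rewrite invr_gt0.
have Gn1 : 1 <= G * n%:R by rewrite -ler_pdivrMr // div1r.
set s := Num.sqrt (G * n%:R).
have s_gt0 : 0 < s by rewrite sqrtr_gt0 mulr_gt0.
have sE : s ^+ 2 = G * n%:R by rewrite sqr_sqrtr // ltW // mulr_gt0.
set c := G / s.
have c_gt0 : 0 < c by rewrite divr_gt0.
have cE : c ^+ 2 = G / n%:R.
  by rewrite expr_div_n sE; field; rewrite !lt0r_neq0.
have nc : n%:R^-1 <= c.
  by rewrite /c ler_pdivlMr // mulrC ler_pdivrMr //; nra.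
apply: le_trans (norm_binom_integral_sub n u01 _ _) _.
apply: le_trans (ler_binom_integral n u01 (h := fun w => G^-1 * coord_dev_bound G c u w) _) _.
  move=> w w01; apply: le_trans (dist_powR_ratio_le (gfun_ge0 w01) G_gt0 om01) _.
  by rewrite [X in X <= _]mulrC ler_wpM2l // ?invr_ge0 ?(ltW G_gt0) // dist_gfun_le.
rewrite binom_integralZ (binom_integral_sum_coord n u (fun i y =>
  dev_bound G c (u i) ((y - u i) ^+ 2) + dev_bound G c (1 - u i) ((y - u i) ^+ 2))).
apply: le_trans (_ : G^-1 * \sum_(i < d) 4 * c <= _).
  apply: ler_wpM2l; first by rewrite invr_ge0 ltW.
  by apply: ler_sum => i _; exact: sum_bernstein_dev_bound_pair_le.
rewrite sumr_const card_ord -[_ *+ d]mulr_natr /c.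
suff -> : G^-1 * (4 * (G / s) * d%:R) = 4 * d%:R / s by [].
by field; rewrite !lt0r_neq0.
Qed.

Lemma inv_sqrt_le_powR (R : realType) (n : nat) (G gamma : R) :
  (0 < n)%N -> n%:R `^ (- gamma) <= G ->
  (Num.sqrt (G * n%:R))^-1 <= n%:R `^ (- ((1 - gamma) / 2)).
Proof.
move=> n_gt0 Gn; have n_pos : 0 < n%:R :> R by rewrite ltr0n.
have n_neq0 : n%:R != 0 :> R by rewrite lt0r_neq0.
have G_gt0 : 0 < G := lt_le_trans (powR_gt0 _ n_pos) Gn.
have Gn_gt0 : 0 < G * n%:R by rewrite mulr_gt0.
set P := n%:R `^ _; set s := Num.sqrt _.
have P_ge0 : 0 <= P by exact: powR_ge0.
have s_gt0 : 0 < s by rewrite sqrtr_gt0.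
have sE : s ^+ 2 = G * n%:R by rewrite sqr_sqrtr // ltW.
have PE : P ^+ 2 * n%:R = n%:R `^ gamma.
  rewrite /P -powR_mulrn ?powR_ge0 // -powRrM -[X in _ * X]powRr1 ?ler0n //.
  by rewrite -powRD ?n_neq0 ?implybT //; congr (_ `^ _); field.
have Gpow : 1 <= n%:R `^ gamma * G.
  by move: Gn; rewrite powRN -div1r ler_pdivrMr ?powR_gt0 // mulrC.
rewrite -div1r ler_pdivrMr //.
have Ps_ge0 : 0 <= P * s by rewrite mulr_ge0 // ltW.
have : (P * s) ^+ 2 = n%:R `^ gamma * G by rewrite exprMn sE mulrCA PE mulrC.
nra.
Qed.

Theorem lemma3 (R : realType) (d : nat) (hd : (2 <= d)%N) (omega gamma : R)
    (homega0 : 0 < omega) (homega1 : omega < 1 / 2)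
    (hgamma0 : 1 / (2 * (1 - omega)) < gamma) (hgamma1 : gamma < 1) :
  exists C : R, exists N : nat, forall n : nat, (N <= n)%N ->
    forall u : 'I_d -> R, (forall j, 0 <= u j <= 1) ->
      (n%:R) `^ (- gamma) <= gfun u ->
      `| binom_integral n u (fun w => gfun w `^ omega / gfun u `^ omega) - 1 |
        <= C * ((n%:R) `^ (- ((1 - gamma) / 2)) * ln (n%:R)).
Proof.
have ln2_gt0 : 0 < ln (2 : R) by rewrite ln_gt0 // ltr1n.
exists (4 * d%:R / ln 2), 2%N => n n_ge2 u u01 Gn.
have n_gt0 : (0 < n)%N by apply: leq_trans n_ge2.
have n_ge1 : 1 <= n%:R :> R by rewrite ler1n ltnW.
have nG : n%:R^-1 <= gfun u.
  apply: le_trans Gn; rewrite -powR_inv1 ?ler0n //.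
  by apply: ler_powR => //; lra.
have om01 : 0 < omega <= 1 by apply/andP; split; lra.
apply: le_trans (binom_integral_gfun_ratio_le hd n_gt0 u01 om01 nG) _.
have Ln : 1 <= ln n%:R / ln 2 :> R.
  by rewrite ler_pdivlMr // mul1r ler_ln ?posrE ?ltr0n // ler_nat.
have Pn := inv_sqrt_le_powR n_gt0 Gn.
set P := n%:R `^ _ in Pn *.
have P_ge0 : 0 <= P by exact: powR_ge0.
have d_ge0 : 0 <= 4 * d%:R :> R by rewrite mulr_ge0 ?ler0n.
apply: le_trans (_ : 4 * d%:R * P <= _); first by rewrite ler_wpM2l.
have -> : 4 * d%:R / ln 2 * (P * ln n%:R) = 4 * d%:R * P * (ln n%:R / ln 2) by ring.
by rewrite -[X in X <= _]mulr1 ler_wpM2l // mulr_ge0.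
Qed.
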